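(* Let $n,d\ge1$, $K\in\{1,\dots,d\}$, $0<\mu\le L\le L_{\max}\le nL$ and $r\in[0,1]$. Let the worker compressors be Rand$K_\omega$ and the server compressor Top$K_\alpha$ with (i) $K_\omega=K$ and $K_\alpha=\min\{\lceil\frac{1-r}{r}K\rceil,d\}$ if $r\in[0,\frac12]$, (ii) $K_\omega=\min\{\lceil\frac{r}{1-r}K\rceil,d\}$ and $K_\alpha=K$ if $r\in(\frac12,1]$; correspondingly $\omega=\frac{d}{K_\omega}-1$ and $\alpha=\frac{K_\alpha}{d}$. With $K^r=(1-r)K_\omega+rK_\alpha$, $\mu^r_{\omega,\alpha}=rd/K^r$ and $$\mathfrak m^r_{\mathrm{realistic}}=K^r\Big(\sqrt{\tfrac{L\max\{\omega+1,\mu^r_{\omega,\alpha}\}}{\alpha\mu}}+\sqrt{\tfrac{L_{\max}\omega\max\{\omega+1,\mu^r_{\omega,\alpha}\}}{n\mu}}+\tfrac1\alpha+\omega+\mu^r_{\omega,\alpha}\Big)+d,$$ we have $\mathfrak m^r_{\mathrm{realistic}}=\widetilde{\mathcal O}(\mathfrak m_{\mathrm{AGD}})$ with $\mathfrak m_{\mathrm{AGD}}=d\sqrt{L/\mu}$, i.e. $\mathfrak m^r_{\mathrm{realistic}}\le C\,d\sqrt{L/\mu}$ for a universal constant $C$ (up to logarithmic factors).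
   Context: Rand$K$: the unbiased compressor that keeps $K$ uniformly random coordinates of its input scaled by $d/K$ (variance parameter $\omega=d/K-1$). Top$K$: the biased compressor keeping the $K$ largest-magnitude coordinates (contraction parameter $\alpha=K/d$). $\mathfrak m^r_{\mathrm{realistic}}$ is (up to logarithmic factors) the total communication complexity $(1-r)\cdot(\text{worker-to-server cost})+r\cdot(\text{server-to-worker cost})$ of the method 2Direction for minimizing $f=\frac1n\sum_if_i$ on $\mathbb R^d$ ($f_i$ $L_i$-smooth convex, $L_{\max}=\max_iL_i$, $f$ $L$-smooth and $\mu$-strongly convex), and $d\sqrt{L/\mu}$ is (up to logarithmic factors) that of accelerated gradient descent with uncompressed communication. *)

From HB Require Import structures.
From mathcomp Require Import all_boot all_order all_algebra.
From mathcomp Require Import reals.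
Set Implicit Arguments. Unset Strict Implicit. Unset Printing Implicit Defensive.
Import Order.TTheory GRing.Theory Num.Theory.
Local Open Scope ring_scope.

(* Convention: at r = 0 the quantity (1-r)/r * K is +oo, so K_alpha = d;
   at r = 1 the quantity r/(1-r) * K is +oo, so K_omega = d. *)
Section Params.
Variable R : realType.
Variables (d K r : R).

Definition K_omega : R :=
  if r <= 2^-1 then K
  else if r == 1 then d
  else Num.min (Num.ceil (r / (1 - r) * K))%:~R d.

Definition K_alpha : R :=
  if r <= 2^-1 then
    (if r == 0 then d else Num.min (Num.ceil ((1 - r) / r * K))%:~R d)
  else K.

Definition omega_p : R := d / K_omega - 1.
Definition alpha_p : R := K_alpha / d.
Definition K_r : R := (1 - r) * K_omega + r * K_alpha.
Definition mu_r : R := r * d / K_r.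
End Params.

Definition m_realistic (R : realType) (n : nat) (d K mu L Lmax r : R) : R :=
  let om := omega_p d K r in
  let al := alpha_p d K r in
  let mr := mu_r d K r in
  K_r d K r *
    (Num.sqrt (L * Num.max (om + 1) mr / (al * mu))
     + Num.sqrt (Lmax * om * Num.max (om + 1) mr / (n%:R * mu))
     + al^-1 + om + mr) + d.

(* Every quantity in the bound is controlled by q = d / K.  Both K_omega and
   K_alpha lie in [K, d], so omega + 1, 1 / alpha and mu^r are at most q; and
   since the ceiling overshoots by less than one coordinate, the weights r and
   1 - r bring K^r down to at most 2 K.  With L_max / n <= L and L / mu >= 1,
   each of the five summands is at most q sqrt(L / mu), whence
   m_realistic <= 2 K * 5 q sqrt(L / mu) + d <= 11 d sqrt(L / mu). *)

From HB Require Import structures.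
From mathcomp Require Import all_boot all_order all_algebra reals.
From mathcomp Require Import ring lra.
Set Implicit Arguments. Unset Strict Implicit. Unset Printing Implicit Defensive.
Import Order.TTheory GRing.Theory Num.Theory.
Local Open Scope ring_scope.

Section CeilingBounds.
Variable R : archiRealFieldType.

Lemma ceil_lt_add1 (x : R) : (Num.ceil x)%:~R < x + 1.
Proof. by rewrite -ltrBlDr -[1]/(1%:~R : R) -intrB ceilB1_lt. Qed.

Lemma min_ceil_bounds (x k D : R) : k <= x -> k <= D ->
  k <= Num.min (Num.ceil x)%:~R D <= D.
Proof.
move=> kx kD; rewrite ge_min lexx orbT andbT le_min kD andbT.
exact: le_trans kx (ceil_ge x).
Qed.

Lemma mulr_min_ceil_lt (s t k D : R) : 0 < t ->
  t * Num.min (Num.ceil (s / t * k))%:~R D < s * k + t.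
Proof.
move=> t_gt0; apply: (le_lt_trans (y := t * (Num.ceil (s / t * k))%:~R)).
  by apply: ler_wpM2l; [exact: ltW | rewrite ge_min lexx].
have -> : s * k + t = t * (s / t * k + 1) by field; rewrite gt_eqF.
by rewrite ltr_pM2l // ceil_lt_add1.
Qed.

End CeilingBounds.

Lemma sqrtr_le_mulr (R : rcfType) (x y q : R) :
  0 <= q -> x <= q ^+ 2 * y -> Num.sqrt x <= q * Num.sqrt y.
Proof.
move=> q_ge0 /ler_wsqrtr; by rewrite sqrtrM ?sqr_ge0 // sqrtr_sqr ger0_norm.
Qed.

Lemma ler_wdivl2 (R : numFieldType) (a x y : R) :
  0 <= a -> 0 < x -> x <= y -> a / y <= a / x.
Proof.
move=> a_ge0 x_gt0 x_le_y; apply: (ler_wpM2l a_ge0).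
by rewrite lef_pV2 ?posrE // (lt_le_trans x_gt0).
Qed.

Section CompressorParameters.
Variables (R : realType) (d k r : R).

Lemma K_omega_bounds : 1 <= k <= d -> 0 <= r <= 1 -> k <= K_omega d k r <= d.
Proof.
move=> /andP[k_ge1 k_le_d] /andP[r_ge0 r_le1].
rewrite /K_omega; case: ifP => [_|/negbT]; first by rewrite lexx.
rewrite -ltNge => r_gt_half; case: eqP => [_|/eqP r_neq1]; first by rewrite k_le_d lexx.
have r_lt1 : r < 1 by rewrite lt_neqAle r_neq1.
apply: min_ceil_bounds => //; apply: ler_peMl; first lra.
by rewrite ler_pdivlMr ?subr_gt0 //; lra.
Qed.

Lemma K_alpha_bounds : 1 <= k <= d -> 0 <= r <= 1 -> k <= K_alpha d k r <= d.
Proof.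
move=> /andP[k_ge1 k_le_d] /andP[r_ge0 r_le1].
rewrite /K_alpha; case: ifP => [r_le_half|_]; last by rewrite lexx.
case: eqP => [_|/eqP r_neq0]; first by rewrite k_le_d lexx.
have r_gt0 : 0 < r by rewrite lt_neqAle eq_sym r_neq0.
apply: min_ceil_bounds => //; apply: ler_peMl; first lra.
by rewrite ler_pdivlMr //; lra.
Qed.

Lemma mulr_K_omega_le : 1 <= k -> 0 <= r <= 1 -> (1 - r) * K_omega d k r <= k.
Proof.
move=> k_ge1 /andP[r_ge0 r_le1].
rewrite /K_omega; case: ifP => _; first by apply: ler_piMl; lra.
case: eqP => [->|/eqP r_neq1].
  by rewrite subrr mul0r; lra.
have r_lt1 : r < 1 by rewrite lt_neqAle r_neq1.
have := @mulr_min_ceil_lt _ r (1 - r) k d; rewrite subr_gt0 => /(_ r_lt1); nra.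
Qed.

Lemma mulr_K_alpha_le : 1 <= k -> 0 <= r <= 1 -> r * K_alpha d k r <= k.
Proof.
move=> k_ge1 /andP[r_ge0 r_le1].
rewrite /K_alpha; case: ifP => _; last by apply: ler_piMl => //; lra.
case: eqP => [->|/eqP r_neq0]; first by rewrite mul0r; lra.
have r_gt0 : 0 < r by rewrite lt_neqAle eq_sym r_neq0.
have := @mulr_min_ceil_lt _ (1 - r) r k d r_gt0; nra.
Qed.

Lemma K_r_bounds : 1 <= k <= d -> 0 <= r <= 1 -> k <= K_r d k r <= 2 * k.
Proof.
move=> k_bounds r_bounds; have /andP[k_ge1 _] := k_bounds.
have /andP[r_ge0 r_le1] := r_bounds.
have /andP[Kw_ge _] := K_omega_bounds k_bounds r_bounds.
have /andP[Ka_ge _] := K_alpha_bounds k_bounds r_bounds.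
have Kw_mul := mulr_K_omega_le k_ge1 r_bounds.
have Ka_mul := mulr_K_alpha_le k_ge1 r_bounds.
rewrite /K_r; apply/andP; split; nra.
Qed.

Section Ratios.
Hypotheses (k_bounds : 1 <= k <= d) (r_bounds : 0 <= r <= 1).

Let k_gt0 : 0 < k.
Proof. by case/andP: k_bounds => k_ge1 _; apply: lt_le_trans k_ge1. Qed.

Let d_gt0 : 0 < d.
Proof. by case/andP: k_bounds => _; apply: lt_le_trans. Qed.

Let d_ge0 : 0 <= d. Proof. exact: ltW. Qed.

Lemma omega_p_ge0 : 0 <= omega_p d k r.
Proof.
have /andP[Kw_ge Kw_le] := K_omega_bounds k_bounds r_bounds.
by rewrite subr_ge0 ler_pdivlMr ?mul1r // (lt_le_trans k_gt0).
Qed.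

Lemma omega_p_add1_le : omega_p d k r + 1 <= d / k.
Proof.
have /andP[Kw_ge _] := K_omega_bounds k_bounds r_bounds.
by rewrite subrK ler_wdivl2.
Qed.

Lemma alpha_p_inv_le : (alpha_p d k r)^-1 <= d / k.
Proof.
have /andP[Ka_ge _] := K_alpha_bounds k_bounds r_bounds.
by rewrite invf_div ler_wdivl2.
Qed.

Lemma alpha_p_gt0 : 0 < alpha_p d k r.
Proof.
have /andP[Ka_ge _] := K_alpha_bounds k_bounds r_bounds.
by rewrite divr_gt0 // (lt_le_trans k_gt0).
Qed.

Lemma mu_r_bounds : 0 <= mu_r d k r <= d / k.
Proof.
have /andP[Kr_ge _] := K_r_bounds k_bounds r_bounds.
have /andP[r_ge0 r_le1] := r_bounds.
have Kr_gt0 : 0 < K_r d k r := lt_le_trans k_gt0 Kr_ge.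
rewrite /mu_r divr_ge0 ?mulr_ge0 ?(ltW Kr_gt0) //=.
apply: (le_trans (y := d / K_r d k r)); last exact: ler_wdivl2.
by apply: ler_wpM2r; rewrite ?invr_ge0 ?(ltW Kr_gt0) // ler_piMl.
Qed.

End Ratios.
End CompressorParameters.

Section Estimate.
Variables (R : realType) (n : nat) (d k mu L Lmax r : R).
Hypotheses (n_gt0 : (0 < n)%N) (k_bounds : 1 <= k <= d) (r_bounds : 0 <= r <= 1).
Hypotheses (mu_gt0 : 0 < mu) (mu_le_L : mu <= L) (Lmax_le : Lmax <= n%:R * L).

Local Notation om := (omega_p d k r).
Local Notation al := (alpha_p d k r).
Local Notation M := (Num.max (om + 1) (mu_r d k r)).

Let L_div_mu_ge1 : 1 <= L / mu.
Proof. by rewrite ler_pdivlMr ?mul1r. Qed.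

Let M_bounds : 0 <= M <= d / k.
Proof.
have /andP[mr_ge0 mr_le] := mu_r_bounds k_bounds r_bounds.
by rewrite le_max mr_ge0 orbT ge_max omega_p_add1_le.
Qed.

Lemma sqrt_L_term_le :
  Num.sqrt (L * M / (al * mu)) <= d / k * Num.sqrt (L / mu).
Proof.
have /andP[M_ge0 M_le] := M_bounds.
have al_inv_ge0 : 0 <= al^-1 by rewrite invr_ge0; exact/ltW/alpha_p_gt0.
apply: sqrtr_le_mulr; first exact: le_trans M_ge0 M_le.
have -> : L * M / (al * mu) = (M * al^-1) * (L / mu) by rewrite invfM; ring.
apply: ler_wpM2r; first exact: le_trans ler01 L_div_mu_ge1.
by rewrite expr2 ler_pM // alpha_p_inv_le.
Qed.

Lemma sqrt_Lmax_term_le :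
  Num.sqrt (Lmax * om * M / (n%:R * mu)) <= d / k * Num.sqrt (L / mu).
Proof.
have /andP[M_ge0 M_le] := M_bounds.
have om_ge0 := omega_p_ge0 k_bounds r_bounds.
have om_le : om <= d / k by have := omega_p_add1_le k_bounds r_bounds; lra.
have n_pos : 0 < n%:R :> R by rewrite ltr0n.
apply: sqrtr_le_mulr; first exact: le_trans M_ge0 M_le.
have -> : Lmax * om * M / (n%:R * mu) = (Lmax / n%:R / mu) * (om * M).
  by rewrite invfM; ring.
apply: (le_trans (y := L / mu * (om * M))).
  apply: ler_wpM2r; first exact: mulr_ge0.
  apply: ler_wpM2r; first by rewrite invr_ge0; exact: ltW.
  by rewrite ler_pdivrMr // mulrC.
rewrite mulrC; apply: ler_wpM2r; first exact: le_trans ler01 L_div_mu_ge1.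
by rewrite expr2 ler_pM.
Qed.

Lemma m_realistic_le : m_realistic n d k mu L Lmax r <= 11 * d * Num.sqrt (L / mu).
Proof.
have /andP[Kr_ge Kr_le] := K_r_bounds k_bounds r_bounds.
have /andP[mr_ge0 mr_le] := mu_r_bounds k_bounds r_bounds.
have om_ge0 := omega_p_ge0 k_bounds r_bounds.
have om_le := omega_p_add1_le k_bounds r_bounds.
have al_inv_ge0 : 0 <= al^-1 by rewrite invr_ge0; exact/ltW/alpha_p_gt0.
have al_inv_le := alpha_p_inv_le k_bounds r_bounds.
have T1_le := sqrt_L_term_le; have T2_le := sqrt_Lmax_term_le.
have T1_ge0 := sqrtr_ge0 (L * M / (al * mu)).
have T2_ge0 := sqrtr_ge0 (Lmax * om * M / (n%:R * mu)).
set q := d / k in om_le al_inv_le mr_le T1_le T2_le *.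
set s := Num.sqrt (L / mu) in T1_le T2_le *.
have s_ge1 : 1 <= s by rewrite /s -sqrtr1 ler_wsqrtr.
have /andP[k_ge1 k_le_d] := k_bounds.
have kq : k * q = d by rewrite /q mulrC divfK // gt_eqF //; lra.
have q_ge0 : 0 <= q by rewrite /q divr_ge0 //; lra.
rewrite /m_realistic -/om -/al -/q -/s.
set terms := (X in K_r d k r * X).
have terms_ge0 : 0 <= terms by rewrite /terms; lra.
have terms_le : terms <= 5 * q * s by rewrite /terms; nra.
apply: (le_trans (y := 2 * k * (5 * q * s) + d * s)).
  apply: lerD; first by apply: ler_pM => //; lra.
  by apply: ler_peMr => //; lra.
by rewrite -kq; lra.
Qed.

End Estimate.

Theorem theorem5 :
  exists C : nat, forall (R : realType) (n d K : nat) (mu L Lmax r : R),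
    (1 <= n)%N -> (1 <= d)%N -> (1 <= K <= d)%N ->
    0 < mu -> mu <= L -> L <= Lmax -> Lmax <= n%:R * L ->
    0 <= r <= 1 ->
    m_realistic n d%:R K%:R mu L Lmax r <= C%:R * d%:R * Num.sqrt (L / mu).
Proof.
exists 11%N => R n d K mu L Lmax r n_gt0 _ K_bounds mu_gt0 mu_le_L _ Lmax_le r_bounds.
apply: m_realistic_le => //.
by rewrite ler1n ler_nat.
Qed.
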